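(* Let $\mathbb{K}$ be a field of characteristic not $2$ and $n\geq 3$. Let $\mathcal{V}$ be a linear subspace of $M_n(\mathbb{K})$ in which every matrix has at most two distinct eigenvalues in $\mathbb{K}$, and assume $\mathcal{V}$ is spanned by matrices of rank $1$ and trace $0$. Then $\dim\mathcal{V}\leq n^2/2$. *)

From HB Require Import structures.
From mathcomp Require Import all_boot all_order all_algebra.
Set Implicit Arguments. Unset Strict Implicit. Unset Printing Implicit Defensive.
Import Order.TTheory GRing.Theory Num.Theory.
Local Open Scope ring_scope.

Definition at_most_two_eigenvalues (K : fieldType) (n : nat) (A : 'M[K]_n) :=
  forall a b c : K, eigenvalue A a -> eigenvalue A b -> eigenvalue A c ->
    [\/ a = b, b = c | a = c].

From HB Require Import structures.
From mathcomp Require Import all_boot all_order all_algebra.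
Set Implicit Arguments. Unset Strict Implicit. Unset Printing Implicit Defensive.
Import Order.TTheory GRing.Theory Num.Theory.
Local Open Scope ring_scope.

(* Write the rank-one spanning matrices as X = c r and
   Y = d s with column vectors c, d and row vectors r, s; trace zero means
   r c = 0 and s d = 0.  If tr (X Y) = (r d)(s c) were nonzero, then for
   l = ((r d)(s c))^-1 the matrix X + l Y of V would have the eigenvalues
   1 and -1 (eigenvectors r + e/(s c) s with e = 1, -1) and also 0 (its rank
   is at most 2 < n), three distinct values since char K <> 2.  Hence the
   trace form (A, B) |-> tr (A B) vanishes on pairs of spanning matrices,
   and by bilinearity on all of V: V is totally isotropic.  Finally, if
   A_1, ..., A_d is a basis of V, the d x n^2 matrices with rows vec A_i and
   vec A_i^T both have rank d and their product M M'^T has entries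
   tr (A_i A_j) = 0, so Sylvester's inequality gives d + d - n^2 <= 0. *)

Lemma oner_neq_oppr1 (K : fieldType) : (2 \notin [pchar K])%N -> (1 : K) != -1.
Proof.
move=> char2; apply/negP => /eqP one_eq_m1; move: char2; rewrite inE /=.
by rewrite -natr1 {1}one_eq_m1 addNr eqxx.
Qed.

Lemma rank_factor (K : fieldType) m n k (A : 'M[K]_(m, n)) : \rank A = k ->
  exists (C : 'M[K]_(m, k)) (R : 'M[K]_(k, n)), A = C *m R.
Proof.
move=> rkA; have := mulmx_base A; move: (col_base A) (row_base A).
by rewrite rkA => C R <-; exists C, R.
Qed.

Lemma trace_col_row (K : fieldType) n (c : 'cV[K]_n) (r : 'rV[K]_n) :
  \tr (c *m r) = (r *m c) 0 0.
Proof. by rewrite mxtrace_mulC /mxtrace big_ord1. Qed.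

Lemma eigenvalue0_rank_lt (K : fieldType) n (A : 'M[K]_n) :
  (\rank A < n)%N -> eigenvalue A 0.
Proof.
move=> rkA; rewrite /eigenvalue /eigenspace raddf0 subr0 kermx_eq0 /row_free.
by rewrite neq_ltn rkA.
Qed.

Section TwoRankOneMatrices.
Variables (K : fieldType) (n : nat) (c d : 'cV[K]_n) (r s : 'rV[K]_n).
Hypotheses (rc0 : r *m c = 0) (sd0 : s *m d = 0).
Let a := (r *m d) 0 0.
Let b := (s *m c) 0 0.
Hypotheses (a_neq0 : a != 0) (b_neq0 : b != 0).

(* Each square root e of 1 is an eigenvalue of c r + (a b)^-1 d s, with left
   eigenvector r + (e / b) s. *)
Lemma sqrt1_eigenvalue (e : K) : e * e = 1 ->
  eigenvalue (c *m r + (a * b)^-1 *: (d *m s)) e.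
Proof.
move=> ee; have rd : r *m d = a%:M by rewrite [LHS]mx11_scalar.
have sc : s *m c = b%:M by rewrite [LHS]mx11_scalar.
have e_neq0 : e != 0 by apply: contra_eq_neq ee => ->; rewrite mul0r eq_sym oner_neq0.
apply/eigenvalueP; exists (r + (e / b) *: s).
  rewrite mulmxDl !mulmxDr -!scalemxAr -!scalemxAl !mulmxA rc0 rd sc sd0.
  rewrite !mul0mx !mul_scalar_mx !scaler0 add0r addr0 !scalerA scalerDr scalerA.
  rewrite addrC divfK //; congr (_ + _); congr (_ *: _).
  by rewrite mulrA ee mul1r invfM mulrAC mulVf // mul1r.
apply: contraNneq e_neq0 => eigvec0; apply/eqP.
have := congr1 (fun v => (v *m c) 0 0) eigvec0.
by rewrite /= mul0mx mulmxDl -scalemxAl rc0 sc add0r !mxE /= mulr1n divfK.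
Qed.

End TwoRankOneMatrices.

Lemma rank1_trace0_orthogonal (K : fieldType) n (X Y : 'M[K]_n) :
  (2 \notin [pchar K])%N -> (3 <= n)%N ->
  \rank X = 1%N -> \tr X = 0 -> \rank Y = 1%N -> \tr Y = 0 ->
  (forall l : K, at_most_two_eigenvalues (X + l *: Y)) ->
  \tr (X *m Y) = 0.
Proof.
move=> char2 n_ge3 /rank_factor[c [r ->]] trX /rank_factor[d [s ->]] trY two_eig.
have rc0 : r *m c = 0 by rewrite [LHS]mx11_scalar -trace_col_row trX raddf0.
have sd0 : s *m d = 0 by rewrite [LHS]mx11_scalar -trace_col_row trY raddf0.
have -> : \tr (c *m r *m (d *m s)) = (r *m d) 0 0 * (s *m c) 0 0.
  rewrite -mulmxA mxtrace_mulC !mulmxA -[r *m d *m s *m c]mulmxA.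
  by rewrite /mxtrace big_ord1 mxE big_ord1.
apply: contra_neq_eq (oner_neq_oppr1 char2) => ab_neq0.
have [a_neq0 b_neq0] : (r *m d) 0 0 != 0 /\ (s *m c) 0 0 != 0.
  by apply/andP; rewrite -negb_or -mulf_eq0.
pose Z := c *m r + ((r *m d) 0 0 * (s *m c) 0 0)^-1 *: (d *m s).
have eig1 : eigenvalue Z 1 by apply: sqrt1_eigenvalue; rewrite ?mulr1.
have eigN1 : eigenvalue Z (-1) by apply: sqrt1_eigenvalue; rewrite ?mulrNN ?mulr1.
have eig0 : eigenvalue Z 0.
  apply: eigenvalue0_rank_lt; apply: leq_ltn_trans n_ge3.
  apply: leq_trans (mxrank_add _ _) _; rewrite -[2%N]/(1 + 1)%N leq_add //.
    exact: mulmx_max_rank.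
  by apply: leq_trans (mxrank_scale _ _) _; exact: mulmx_max_rank.
have [//|/eqP|/eqP] := two_eig _ _ _ _ eig1 eigN1 eig0.
  by rewrite oppr_eq0 oner_eq0.
by rewrite oner_eq0.
Qed.

(* Trace orthogonality is bilinear, so it extends from a spanning family to
   the whole span. *)
Lemma trace_orthogonal_span (K : fieldType) n (s : seq 'M[K]_n) :
  {in s &, forall X Y, \tr (X *m Y) = 0} ->
  {in <<s>>%VS &, forall A B, \tr (A *m B) = 0}.
Proof.
move=> orth_s A B /(coord_span (X := in_tuple s)) -> /(coord_span (X := in_tuple s)) ->.
rewrite mulmx_suml linear_sum big1 // => i _.
rewrite mulmx_sumr linear_sum big1 // => j _.
by rewrite -scalemxAl -scalemxAr !linearZ /= orth_s ?mulr0 ?mem_nth ?size_tuple.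
Qed.

Lemma mxvec_dot_trmx (K : fieldType) m n (A : 'M[K]_(m, n)) (B : 'M[K]_(n, m)) :
  (mxvec A *m (mxvec B^T)^T) 0 0 = \tr (A *m B).
Proof.
transitivity (\sum_i \sum_j A i j * B j i).
  rewrite mxE (reindex _ (curry_mxvec_bij _ _)) /= pair_bigA /=.
  by apply: eq_bigr => [[i j]] _ /=; rewrite !mxE !mxvecE !mxE.
by apply: eq_bigr => i _; rewrite mxE.
Qed.

Lemma row_free_mxvec (K : fieldType) m n m' n' d
    (f : {linear 'M[K]_(m, n) -> 'M[K]_(m', n')}) (X : d.-tuple 'M[K]_(m, n)) :
  injective f -> free X -> row_free (\matrix_(i < d) mxvec (f X`_i)).
Proof.
move=> f_inj /freeP freeX; apply: inj_row_free => v vM0; apply/rowP => i.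
rewrite mxE; apply: freeX => //; apply: f_inj; rewrite linear0.
apply: (can_inj mxvecK); rewrite linear0 -vM0 mulmx_sum_row !linear_sum.
by apply: eq_bigr => j _; rewrite !linearZ rowK.
Qed.

Lemma trace_isotropic_dim (K : fieldType) n (V : {vspace 'M[K]_n}) :
  {in V &, forall A B, \tr (A *m B) = 0} -> (2 * \dim V <= n ^ 2)%N.
Proof.
move=> isoV; set d := \dim V; pose X := vbasis V.
have freeX : free X := basis_free (vbasisP V).
pose M := \matrix_(i < d) mxvec (idfun X`_i).
pose Mt := \matrix_(i < d) mxvec (trmx X`_i).
have rkM : \rank M = d by apply/eqP/row_free_mxvec => //; exact: inj_id.
have rkMt : \rank Mt = d by apply/eqP/row_free_mxvec => //; exact: trmx_inj.
have MMt0 : M *m Mt^T = 0.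
  apply/matrixP => i j; rewrite [RHS]mxE -(isoV X`_i X`_j) -?mxvec_dot_trmx.
    by rewrite !mxE; apply: eq_bigr => k _; rewrite !mxE.
  1,2: by apply: vbasis_mem; apply: mem_nth; rewrite size_tuple.
have := mxrank_mul_min M Mt^T.
by rewrite MMt0 mxrank0 mxrank_tr rkM rkMt leqn0 subn_eq0 mul2n -addnn -mulnn.
Qed.

Theorem mainTheorem11 (K : fieldType) (n : nat)
  (hchar : (2 \notin [pchar K])%N) (hn : (3 <= n)%N)
  (V : {vspace 'M[K]_n})
  (hV : forall A : 'M[K]_n, A \in V -> at_most_two_eigenvalues A)
  (hspan : exists s : seq 'M[K]_n,
      (forall A, A \in s -> \rank A = 1%N /\ \tr A = 0) /\ V = <<s>>%VS) :
  (2 * \dim V <= n ^ 2)%N.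
Proof.
have [s [rank1_trace0 defV]] := hspan; rewrite defV in hV *.
apply/trace_isotropic_dim/trace_orthogonal_span => X Y Xs Ys.
have [rkX trX] := rank1_trace0 X Xs; have [rkY trY] := rank1_trace0 Y Ys.
apply: rank1_trace0_orthogonal => // l; apply: hV.
by apply: memvD; [|apply: memvZ]; apply: memv_span.
Qed.
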